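(* Each of the logics $\mathbf{K4}_h$, $\mathbf{KD4}_h$, $\mathbf{S4}_h$ and $\mathbf{GL}_h$ has the strong disjunction property: for $L$ any of these logics and any formulas $\Box_nA$, $\Box_mB$ of $\mathcal{L}_\infty$, if $L\vdash\Box_nA\vee\Box_mB$ then $L\vdash A$ or $L\vdash B$.
   Context: The language $\mathcal{L}_\infty$ consists of modal formulas built from propositional atoms, $\bot,\top$, the connectives $\neg,\wedge,\vee,\rightarrow$ and unary modalities $\Box_n$ ($n\in\mathbb{N}$), with the restriction that $\Box_n A$ is a formula only if $n$ is strictly greater than the index of every box occurring in $A$. Axiom instances are only those that are $\mathcal{L}_\infty$-formulas. Axiom schemes (for all $n\ge0$): $\mathbf{H}$: $\Box_n A\rightarrow\Box_{n+1}A$; $\mathbf{K}_h$: $\Box_n(A\rightarrow B)\rightarrow(\Box_nA\rightarrow\Box_nB)$; $\mathbf{4}_h$: $\Box_nA\rightarrow\Box_{n+1}\Box_nA$; $\mathbf{D}_h$: $\neg\Box_n\bot$; $\mathbf{L}_h$: $\Box_{n+1}(\Box_nA\rightarrow A)\rightarrow\Box_nA$; $\mathbf{T}_h$: $\Box_nA\rightarrow A$. For a set $X$ of schemes, $L(X)$ is the least set of $\mathcal{L}_\infty$-formulas containing all classical propositional tautologies and all instances of the schemes in $X$, closed under modus ponens and the rule: from $A$ infer $\Box_nA$ for any $n$ greater than all box indices in $A$. $\mathbf{K4}_h=L(\mathbf{H},\mathbf{K}_h,\mathbf{4}_h)$, $\mathbf{KD4}_h=L(\mathbf{H},\mathbf{K}_h,\mathbf{4}_h,\mathbf{D}_h)$,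 $\mathbf{S4}_h=L(\mathbf{H},\mathbf{K}_h,\mathbf{4}_h,\mathbf{T}_h)$, $\mathbf{GL}_h=L(\mathbf{H},\mathbf{K}_h,\mathbf{4}_h,\mathbf{L}_h)$. *)

From Stdlib Require Import Arith.

(* Raw modal formulas; well-formedness (membership in L_infty) is a separate predicate. *)
Inductive form : Type :=
  | Var : nat -> form
  | Bot : form
  | Top : form
  | Neg : form -> form
  | And : form -> form -> form
  | Or  : form -> form -> form
  | Imp : form -> form -> form
  | Box : nat -> form -> form.

Fixpoint boxes_below (n : nat) (A : form) : Prop :=
  match A with
  | Var _ | Bot | Top => True
  | Neg B => boxes_below n B
  | And B C | Or B C | Imp B C => boxes_below n B /\ boxes_below n C
  | Box k B => k < n /\ boxes_below n B
  end.

Fixpoint wf (A : form) : Prop :=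
  match A with
  | Var _ | Bot | Top => True
  | Neg B => wf B
  | And B C | Or B C | Imp B C => wf B /\ wf C
  | Box n B => boxes_below n B /\ wf B
  end.

Fixpoint peval (v : form -> bool) (A : form) : bool :=
  match A with
  | Var _ => v A
  | Bot => false
  | Top => true
  | Neg B => negb (peval v B)
  | And B C => andb (peval v B) (peval v C)
  | Or B C => orb (peval v B) (peval v C)
  | Imp B C => implb (peval v B) (peval v C)
  | Box _ _ => v A
  end.

Definition tautology (A : form) : Prop := forall v, peval v A = true.

Inductive scheme : Type := SH | SK | S4 | SD | SL | ST.

Definition instance (s : scheme) (F : form) : Prop :=
  match s with
  | SH => exists n A, F = Imp (Box n A) (Box (S n) A)
  | SK => exists n A B, F = Imp (Box n (Imp A B)) (Imp (Box n A) (Box n B))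
  | S4 => exists n A, F = Imp (Box n A) (Box (S n) (Box n A))
  | SD => exists n, F = Neg (Box n Bot)
  | SL => exists n A, F = Imp (Box (S n) (Imp (Box n A) A)) (Box n A)
  | ST => exists n A, F = Imp (Box n A) A
  end.

Inductive prov (X : scheme -> Prop) : form -> Prop :=
  | prov_taut : forall A, wf A -> tautology A -> prov X A
  | prov_ax : forall s A, X s -> wf A -> instance s A -> prov X A
  | prov_mp : forall A B, prov X A -> prov X (Imp A B) -> prov X B
  | prov_nec : forall n A, prov X A -> boxes_below n A -> prov X (Box n A).

Inductive logic : Type := K4h | KD4h | S4h | GLh.

Definition schemes_of (L : logic) (s : scheme) : Prop :=
  match L with
  | K4h => s = SH \/ s = SK \/ s = S4
  | KD4h => s = SH \/ s = SK \/ s = S4 \/ s = SD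
  | S4h => s = SH \/ s = SK \/ s = S4 \/ s = ST
  | GLh => s = SH \/ s = SK \/ s = S4 \/ s = SL
  end.

Definition derivable (L : logic) (A : form) : Prop := prov (schemes_of L) A.

(** The argument is a Kleene–Aczel slash.  Read [Box n B] as "B is derivable
    and, for logics with the reflexive clause, B itself holds", atoms as false,
    and the connectives classically.  Every theorem of the logic holds under
    this reading, so a derivable [Or (Box n A) (Box m B)] yields a derivation
    of [A] or of [B].  The reflexive clause is what makes D and T hold; for
    GL it is dropped, and L holds because of the Löb rule
    [⊢ Box n A -> A  ⟹  ⊢ Box n A]. *)

From Stdlib Require Import Bool ClassicalDescription.

Section Slash.

Variable X : scheme -> Prop.
Variable Refl : Prop.

Fixpoint slash (F : form) : Prop :=
  match F with
  | Var _ => False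
  | Bot => False
  | Top => True
  | Neg B => ~ slash B
  | And B C => slash B /\ slash C
  | Or B C => slash B \/ slash C
  | Imp B C => slash B -> slash C
  | Box _ B => prov X B /\ (Refl -> slash B)
  end.

Definition slash_valuation (F : form) : bool :=
  if excluded_middle_informative (slash F) then true else false.

Lemma slash_valuationP F : slash_valuation F = true <-> slash F.
Proof.
  unfold slash_valuation.
  destruct (excluded_middle_informative (slash F)); intuition discriminate.
Qed.

Lemma peval_slash_valuation F : peval slash_valuation F = true <-> slash F.
Proof.
  induction F as [i| | |B IHB|B IHB C IHC|B IHB C IHC|B IHB C IHC|n B _];
    simpl.
  - apply (slash_valuationP (Var i)).
  - intuition discriminate.
  - tauto.
  - rewrite negb_true_iff, <- not_true_iff_false; tauto.
  - rewrite andb_true_iff; tauto.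
  - rewrite orb_true_iff; tauto.
  - destruct (peval slash_valuation B), (peval slash_valuation C);
      simpl; intuition discriminate.
  - apply (slash_valuationP (Box n B)).
Qed.

Lemma slash_tautology F : tautology F -> slash F.
Proof.
  intro taut. apply peval_slash_valuation, taut.
Qed.

Lemma prov_lob_rule n A :
  X SL -> wf (Box (S n) (Imp (Box n A) A)) ->
  prov X (Imp (Box n A) A) -> prov X (Box n A).
Proof.
  intros XL wf_box derA.
  apply prov_mp with (Box (S n) (Imp (Box n A) A)).
  - apply prov_nec; [exact derA | apply wf_box].
  - apply prov_ax with SL; simpl in wf_box |- *; [exact XL | tauto | eauto].
Qed.

Hypothesis Refl_of_D : X SD -> Refl.
Hypothesis Refl_of_T : X ST -> Refl.
Hypothesis not_Refl_of_L : X SL -> ~ Refl.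

Lemma slash_instance s F : X s -> wf F -> instance s F -> slash F.
Proof.
  intros Xs wfF inst.
  destruct s; simpl in inst.
  - destruct inst as [n [A ->]]; simpl; tauto.
  - destruct inst as [n [A [B ->]]]; simpl.
    intros [derAB slashAB] [derA slashA].
    split; [apply prov_mp with A | ]; tauto.
  - destruct inst as [n [A ->]]; simpl in wfF |- *.
    intros [derA slashA].
    split; [apply prov_nec | ]; tauto.
  - destruct inst as [n ->]; simpl; tauto.
  - destruct inst as [n [A ->]]; simpl in wfF |- *.
    intros [derBoxA_A _].
    split; [apply prov_mp with (Box n A) | ]; try tauto.
    apply prov_lob_rule; simpl; tauto.
  - destruct inst as [n [A ->]]; simpl; tauto.
Qed.

Lemma slash_sound F : prov X F -> slash F.
Proof.
  induction 1 as [F _ taut|s F Xs wfF inst|A B _ IHA _ IHAB|n A derA IHA _].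
  - exact (slash_tautology F taut).
  - exact (slash_instance s F Xs wfF inst).
  - exact (IHAB IHA).
  - simpl; tauto.
Qed.

End Slash.

Lemma prov_box_disjunction X n m A B :
  (X SL -> ~ X SD /\ ~ X ST) ->
  prov X (Or (Box n A) (Box m B)) -> prov X A \/ prov X B.
Proof.
  intros no_L_with_D_T der.
  assert (slash_der : slash X (~ X SL) (Or (Box n A) (Box m B))).
  { apply slash_sound; [intros XD XL | intros XT XL | tauto | exact der];
      destruct (no_L_with_D_T XL); tauto. }
  simpl in slash_der; tauto.
Qed.

Theorem theorem3p15 :
  forall (L : logic) (n m : nat) (A B : form),
    wf (Box n A) -> wf (Box m B) ->
    derivable L (Or (Box n A) (Box m B)) ->
    derivable L A \/ derivable L B.
Proof.
  intros L n m A B _ _ der.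
  apply prov_box_disjunction with n m; [|exact der].
  destruct L; simpl; intuition discriminate.
Qed.
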